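(* For all $n\ge1$, $a_{\{0102,0121\}}(n)=\frac12\left(3\cdot2^n-n^2-n-2\right)$.
   Context: An ascent in an integer sequence $s_1\cdots s_m$ is an index $j$ with $s_j<s_{j+1}$; $\mathrm{asc}$ denotes the number of ascents. An ascent sequence is a sequence $x_1\cdots x_n$ of nonnegative integers with $x_1=0$ and $x_i\le 1+\mathrm{asc}(x_1\cdots x_{i-1})$ for all $i\ge2$. The reduction $\mathrm{red}(w)$ of an integer sequence $w$ replaces the $i$-th smallest distinct letter of $w$ by $i-1$; a pattern is a reduced sequence. A sequence $x$ contains a pattern $p=p_1\cdots p_k$ if there are indices $i_1<\cdots<i_k$ with $\mathrm{red}(x_{i_1}\cdots x_{i_k})=p$; otherwise $x$ avoids $p$. For a finite set $P$ of patterns, $a_P(n)$ denotes the number of ascent sequences of length $n$ avoiding every pattern in $P$. *)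

From mathcomp Require Import all_boot.
Set Implicit Arguments. Unset Strict Implicit. Unset Printing Implicit Defensive.

Fixpoint asc (s : seq nat) : nat :=
  match s with
  | a :: ((b :: _) as t) => (a < b) + asc t
  | _ => 0
  end.

(* ascent sequence x_1 ... x_n (n >= 1): x_1 = 0 and
   x_i <= 1 + asc(x_1 ... x_{i-1}) for all i >= 2.
   (0-based: nth 0 x 0 = 0 and, for 1 <= i < size x,
    nth 0 x i <= 1 + asc (take i x).) *)
Definition is_ascent_seq (x : seq nat) : bool :=
  (0 < size x) && (nth 0 x 0 == 0) &&
  [forall i : 'I_(size x), (0 < i) ==> (nth 0 x i <= (asc (take i x)).+1)].

Definition red (w : seq nat) : seq nat :=
  map (fun a => index a (sort leq (undup w))) w.

(* x contains p: for some choice of indices i_1 < ... < i_k, encoded by a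
   0/1 mask of length size x, red (x_{i_1} ... x_{i_k}) = p *)
Definition contains (x p : seq nat) : bool :=
  [exists m : (size x).-tuple bool, red (mask m x) == p].

Definition avoids_all (P : seq (seq nat)) (x : seq nat) : bool :=
  all (fun p => ~~ contains x p) P.

(* a_P(n): number of ascent sequences of length n avoiding every pattern of P.
   Every ascent sequence of length n has all entries <= n-1 (x_i <= i-1),
   so enumerating n-tuples with entries in 'I_n loses nothing. *)
Definition aP (P : seq (seq nat)) (n : nat) : nat :=
  #|[set t : n.-tuple 'I_n | is_ascent_seq (map val t) && avoids_all P (map val t)]|.

From mathcomp Require Import all_boot zify.
Set Implicit Arguments. Unset Strict Implicit. Unset Printing Implicit Defensive.

(* An ascent sequence avoiding 0102 and 0121 is a staircase 0..0 1..1 ... m..m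
   climbing by unit steps (so it has m ascents), possibly followed by a return
   to 0. After that return, 0102 forbids every letter above 1 and, when m >= 2,
   0121 (through 0 1 2) also forbids 1: the tail is a word over {0, 1} if m = 1
   and a run of zeros if m >= 2. These are the words accepted by an automaton
   whose states record the stair height; counting its paths, a stair of
   height >= 2 has 2^(n+1) - 1 continuations of length n, a stair of height 1
   has 3 * 2^n - n - 2, and summing these over the stairs of height 0 gives
   the formula. *)

Lemma subseq_rcons2 (s x : seq nat) d v :
  subseq (rcons s d) (rcons x v) = subseq (rcons s d) x || (d == v) && subseq s x.
Proof.
rewrite -subseq_rev -[subseq (rcons s d) x]subseq_rev -[subseq s x]subseq_rev !rev_rcons /=.
case: eqP => [->|_] /=; last by rewrite orbF.
by case sub: (subseq (v :: _) _) => //=; rewrite (cons_subseq sub).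
Qed.

Lemma sorted_leq_last x : sorted leq x -> all (fun a => a <= last 0 x) x.
Proof.
elim: x => [|a [|b y] IHx] //=; first by rewrite leqnn.
by case/andP=> ab /IHx /= /andP [b_le ->]; rewrite andbT (leq_trans ab b_le).
Qed.

Lemma subseq_iota s n : sorted ltn s -> all (fun a => a < n) s -> subseq s (iota 0 n).
Proof.
move=> s_sorted /allP s_lt.
have -> : s = filter (mem s) (iota 0 n); last exact: filter_subseq.
apply: (irr_sorted_eq ltn_trans ltnn s_sorted).
  exact/sorted_filter/iota_ltn_sorted/ltn_trans.
move=> a; rewrite mem_filter mem_iota add0n.
by apply/idP/andP => [sa | []//]; split; last exact: s_lt.
Qed.

Definition letters (s : seq nat) : seq nat := sort leq (undup s).

Lemma letters_sorted s : sorted ltn (letters s).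
Proof.
by rewrite ltn_sorted_uniq_leq sort_uniq undup_uniq (sort_sorted leq_total).
Qed.

Lemma mem_letters s : letters s =i s.
Proof. by move=> a; rewrite mem_sort mem_undup. Qed.

Lemma map_nth_red s : map (nth 0 (letters s)) (red s) = s.
Proof.
by rewrite -map_comp; apply: map_id_in => a sa /=; rewrite nth_index ?mem_letters.
Qed.

Lemma red_lt_size s : all (fun i => i < size (letters s)) (red s).
Proof. by apply/allP => _ /mapP [a sa ->]; rewrite index_mem mem_letters. Qed.

Lemma red_map_nth u p : sorted ltn u -> p =i iota 0 (size u) ->
  red (map (nth 0 u) p) = p.
Proof.
move=> u_sorted p_iota.
have p_lt i : i \in p -> i < size u by rewrite p_iota mem_iota.
rewrite /red -/(letters _).
have -> : letters (map (nth 0 u) p) = u.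
  apply: (irr_sorted_eq ltn_trans ltnn (letters_sorted _) u_sorted) => a.
  rewrite mem_letters; apply/mapP/idP => [[i /p_lt i_lt ->]|]; first exact: mem_nth.
  move=> ua; exists (index a u); last by rewrite nth_index.
  by rewrite p_iota mem_iota index_mem.
rewrite -map_comp; apply: map_id_in => i /p_lt i_lt /=.
by rewrite index_uniq // (sorted_uniq ltn_trans ltnn).
Qed.

Lemma containsP x p : reflect (exists2 s, subseq s x & red s = p) (contains x p).
Proof.
apply: (iffP existsP) => [[m /eqP <-]|[s /subseqP [m size_m ->] <-]].
  by exists (mask m x); first exact: mask_subseq.
by exists (Tuple (introT eqP size_m)).
Qed.

Lemma contains_patternP x p k : p =i iota 0 k ->
  contains x p <-> exists u, [/\ size u = k, sorted ltn u & subseq (map (nth 0 u) p) x].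
Proof.
move=> p_iota; have p_lt i : i \in p -> i < k by rewrite p_iota mem_iota.
split=> [/containsP [s sub_sx red_s]|[u [size_u u_sorted sub_x]]]; last first.
  by apply/containsP; exists (map (nth 0 u) p); rewrite // red_map_nth // size_u.
have k_le : k <= size (letters s).
  have sub_iota : {subset iota 0 k <= iota 0 (size (letters s))}.
    by move=> i; rewrite -p_iota mem_iota -red_s => /(allP (red_lt_size s)).
  by have := uniq_leq_size (iota_uniq 0 k) sub_iota; rewrite !size_iota.
exists (take k (letters s)); split.
- by rewrite size_take_min; apply/minn_idPl.
- exact/take_sorted/letters_sorted.
rewrite -(map_nth_red s) red_s in sub_sx; congr (subseq _ x): sub_sx.
by apply/eq_in_map => i /p_lt i_lt; rewrite nth_take.
Qed.

Lemma contains_0102P x : contains x [:: 0; 1; 0; 2] <->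
  exists a b d, a < b < d /\ subseq [:: a; b; a; d] x.
Proof.
have p_iota : [:: 0; 1; 0; 2] =i iota 0 3 by move=> i; rewrite !inE; lia.
rewrite (contains_patternP x p_iota); split.
  case=> u [size_u sorted_u sub].
  case: u size_u sorted_u sub => [|a [|b [|d []]]] // _ sorted_abd sub.
  by case/and3P: sorted_abd => ab bd _; exists a, b, d; split; first exact/andP.
by case=> a [b [d [/andP [ab bd] sub]]]; exists [:: a; b; d]; rewrite /= ab bd.
Qed.

Lemma contains_0121P x : contains x [:: 0; 1; 2; 1] <->
  exists a b c, a < b < c /\ subseq [:: a; b; c; b] x.
Proof.
have p_iota : [:: 0; 1; 2; 1] =i iota 0 3 by move=> i; rewrite !inE; lia.
rewrite (contains_patternP x p_iota); split.
  case=> u [size_u sorted_u sub].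
  case: u size_u sorted_u sub => [|a [|b [|c []]]] // _ sorted_abc sub.
  by case/and3P: sorted_abc => ab bc _; exists a, b, c; split; first exact/andP.
by case=> a [b [c [/andP [ab bc] sub]]]; exists [:: a; b; c]; rewrite /= ab bc.
Qed.

Lemma asc_rcons x v : x != [::] -> asc (rcons x v) = asc x + (last 0 x < v).
Proof.
case: x => [|a x] // _; elim: x a => [|b x IHx] a /=; first by rewrite addn0.
by have /= -> := IHx b; rewrite addnA.
Qed.

Lemma leq_asc_size s : asc s <= (size s).-1.
Proof. by elim: s => [|a [|b s] IHs] //=; case: (a < b) IHs => /=; lia. Qed.

Lemma is_ascent_seq1 v : is_ascent_seq [:: v] = (v == 0).
Proof.
by rewrite /is_ascent_seq /=; apply/andb_idr => _; apply/forallP => -[[|i] //].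
Qed.

Lemma is_ascent_seq_rcons x v : x != [::] ->
  is_ascent_seq (rcons x v) = is_ascent_seq x && (v <= (asc x).+1).
Proof.
rewrite -size_eq0 -lt0n => x_gt0.
rewrite /is_ascent_seq size_rcons x_gt0 nth_rcons x_gt0 -!andbA; do 2 congr (_ && _).
apply/forallP/andP => [ok|[ok v_le] i].
  split; last by have := ok ord_max; rewrite /= x_gt0 nth_rcons ltnn eqxx -cats1 take_size_cat.
  apply/forallP => i; have := ok (widen_ord (leqnSn _) i).
  by rewrite /= nth_rcons ltn_ord -cats1 takel_cat // ltnW.
have [i_lt | i_ge] := ltnP i (size x).
  have := forallP ok (Ordinal i_lt).
  by rewrite /= nth_rcons i_lt -cats1 takel_cat // ltnW.
have -> : nat_of_ord i = size x by apply/anti_leq; rewrite i_ge -ltnS ltn_ord.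
by rewrite nth_rcons ltnn eqxx -cats1 take_size_cat //; apply/implyP.
Qed.

Lemma ascent_seq_lt_size x : is_ascent_seq x -> all (fun a => a < size x) x.
Proof.
elim/last_ind: x => [|x v IHx] //; have [->|x_nil] := eqVneq x [::].
  by rewrite [rcons _ _]/= is_ascent_seq1 => /eqP ->.
rewrite is_ascent_seq_rcons // => /andP [/IHx x_lt v_le].
rewrite all_rcons size_rcons; apply/andP; split; last by apply: sub_all x_lt => a /ltnW.
have := leq_asc_size x; have : 0 < size x by rewrite lt0n size_eq0.
lia.
Qed.

Lemma contains_size x p : contains x p -> size p <= size x.
Proof. by case/containsP => s /size_subseq le_sx <-; rewrite size_map. Qed.

Definition closes_0102 x v := exists a b, a < b < v /\ subseq [:: a; b; a] x.
Definition closes_0121 x v := exists a c, a < v < c /\ subseq [:: a; v; c] x.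

Lemma contains_0102_rcons x v : contains (rcons x v) [:: 0; 1; 0; 2] <->
  contains x [:: 0; 1; 0; 2] \/ closes_0102 x v.
Proof.
rewrite !contains_0102P; split.
  case=> a [b [d [abd]]].
  rewrite (subseq_rcons2 [:: a; b; a]) => /orP [sub|/andP [/eqP dv sub]].
    by left; exists a, b, d.
  by right; exists a, b; rewrite -dv.
case=> [[a [b [d [abd sub]]]]|[a [b [abv sub]]]].
  by exists a, b, d; split; last exact: subseq_trans sub (subseq_rcons _ _).
by exists a, b, v; rewrite (subseq_rcons2 [:: a; b; a]) eqxx sub orbT.
Qed.

Lemma contains_0121_rcons x v : contains (rcons x v) [:: 0; 1; 2; 1] <->
  contains x [:: 0; 1; 2; 1] \/ closes_0121 x v.
Proof.
rewrite !contains_0121P; split.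
  case=> a [b [c [abc]]].
  rewrite (subseq_rcons2 [:: a; b; c]) => /orP [sub|/andP [/eqP bv sub]].
    by left; exists a, b, c.
  by right; exists a, c; rewrite -bv.
case=> [[a [b [c [abc sub]]]]|[a [c [avc sub]]]].
  by exists a, b, c; split; last exact: subseq_trans sub (subseq_rcons _ _).
by exists a, v, c; rewrite (subseq_rcons2 [:: a; v; c]) eqxx sub orbT.
Qed.

Definition avoider x :=
  is_ascent_seq x && avoids_all [:: [:: 0; 1; 0; 2]; [:: 0; 1; 2; 1]] x.

Lemma avoider_rcons x v : x != [::] -> avoider (rcons x v) <->
  [/\ avoider x, v <= (asc x).+1, ~ closes_0102 x v & ~ closes_0121 x v].
Proof.
move=> x_nil; rewrite /avoider /avoids_all /= !andbT is_ascent_seq_rcons //.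
have E1 := contains_0102_rcons x v; have E2 := contains_0121_rcons x v.
split=> [|[/and3P [asc_x /negP c1 /negP c2] v_le n1 n2]].
  case/and3P=> /andP [asc_x v_le] /negP c1 /negP c2; split=> //.
  - rewrite asc_x; apply/and3P; split=> //; apply/negP => h; [apply: c1 | apply: c2].
      by apply/E1; left.
    by apply/E2; left.
  - by move=> h; apply: c1; apply/E1; right.
  by move=> h; apply: c2; apply/E2; right.
by rewrite asc_x v_le; apply/and3P; split=> //; apply/negP; [move/E1 | move/E2]; tauto.
Qed.

Lemma avoider1 v : avoider [:: v] = (v == 0).
Proof.
have short p : size p = 4 -> ~~ contains [:: v] p.
  by move=> size_p; apply/negP => /contains_size; rewrite size_p.
by rewrite /avoider /avoids_all /= !short ?andbT ?is_ascent_seq1.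
Qed.

Lemma avoider_rcons0 x : x != [::] -> avoider x -> avoider (rcons x 0).
Proof.
move=> x_nil avoid_x; apply/avoider_rcons => //.
by split=> // [[a [b [/andP [_ //]]]] | [a [c [/andP []]]]].
Qed.

Inductive state := Start | Stair of nat | Tail01 | Tail0 | Dead.

Definition step (s : state) (v : nat) : state :=
  match s with
  | Start => if v == 0 then Stair 0 else Dead
  | Stair m => if m <= v <= m.+1 then Stair v
               else if v == 0 then (if m == 1 then Tail01 else Tail0) else Dead
  | Tail01 => if v <= 1 then Tail01 else Dead
  | Tail0 => if v == 0 then Tail0 else Dead
  | Dead => Dead
  end.

Definition run : seq nat -> state := foldl step Start.

Definition stair m x :=
  [/\ avoider x, sorted leq x, last 0 x = m, asc x = m & subseq (iota 0 m.+1) x].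

Definition state_inv (s : state) (x : seq nat) : Prop :=
  match s with
  | Start => x = [::]
  | Stair m => stair m x
  | Tail01 => [/\ avoider x, all (fun a => a <= 1) x & subseq [:: 0; 1; 0] x]
  | Tail0 => avoider x /\ subseq [:: 0; 1; 2; 0] x
  | Dead => ~~ avoider x /\ x != [::]
  end.

Lemma stair_nil m x : stair m x -> x != [::].
Proof. by case=> _ _ _ _ /size_subseq; rewrite size_iota; case: x. Qed.

Lemma stair_le m x : stair m x -> all (fun a => a <= m) x.
Proof. by case=> _ /sorted_leq_last + <-. Qed.

Lemma stair_climb m x v : stair m x -> m <= v <= m.+1 -> stair v (rcons x v).
Proof.
move=> st_x /andP [m_le v_le]; have x_nil := stair_nil st_x.
have /allP x_le := stair_le st_x; case: st_x => avoid_x sorted_x last_x asc_x sub_x.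
split.
- apply/avoider_rcons => //; split=> //; first by rewrite asc_x.
    case=> a [b [/andP [ab _] /(subseq_sorted leq_trans)/(_ sorted_x)]].
    by rewrite /= andbT => /andP [_]; rewrite leqNgt ab.
  case=> a [c [/andP [_ vc] /mem_subseq/(_ c)]].
  by rewrite !inE eqxx !orbT => /(_ isT)/x_le; lia.
- case: x x_nil sorted_x last_x {sub_x asc_x avoid_x x_le} => [|a x] //= _.
  by rewrite rcons_path => -> ->.
- by rewrite last_rcons.
- by rewrite asc_rcons // asc_x last_x; lia.
have [->|v_eq] := eqVneq v m; first exact: subseq_trans sub_x (subseq_rcons _ _).
have -> : v = m.+1 by lia.
by rewrite -addn1 iotaD cats1 (subseq_rcons2 (iota 0 m.+1)) eqxx sub_x orbT.
Qed.

Lemma stair_drop1 x : stair 1 x -> state_inv Tail01 (rcons x 0).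
Proof.
move=> st_x; have x_nil := stair_nil st_x; have x_le := stair_le st_x.
case: st_x => avoid_x _ _ _ sub_x; split; first exact: avoider_rcons0.
  by rewrite all_rcons x_le.
by rewrite (subseq_rcons2 [:: 0; 1]) eqxx sub_x orbT.
Qed.

Lemma stair_drop2 m x : stair m.+2 x -> state_inv Tail0 (rcons x 0).
Proof.
move=> st_x; have x_nil := stair_nil st_x.
case: st_x => avoid_x _ _ _ sub_x; split; first exact: avoider_rcons0.
have sub012 : subseq [:: 0; 1; 2] x by apply: subseq_trans sub_x; exact: subseq_iota.
by rewrite (subseq_rcons2 [:: 0; 1; 2]) eqxx sub012 orbT.
Qed.

Lemma stair_dead m x v : stair m x -> v != 0 -> ~~ (m <= v <= m.+1) ->
  ~~ avoider (rcons x v).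
Proof.
move=> st_x v_neq0 v_out; have x_nil := stair_nil st_x.
case: st_x => _ _ _ asc_x sub_x; apply/negP => /avoider_rcons [] // _ v_le _; apply.
exists 0, m; have v_lt : v < m by move: v_le; rewrite asc_x; lia.
split; first by lia.
by apply: subseq_trans sub_x; apply: subseq_iota => /=; lia.
Qed.

Lemma stair_step m x v : stair m x -> state_inv (step (Stair m) v) (rcons x v).
Proof.
move=> st_x /=; case: ifP => [v_in | /negbT v_out]; first exact: (stair_climb st_x v_in).
have [v0 | v_neq0] := eqVneq v 0; last first.
  by split; [exact: (stair_dead st_x) | rewrite -size_eq0 size_rcons].
rewrite v0 in v_out *; case: m st_x v_out => [|[|k]] st_x v_out //.
  exact: (stair_drop1 st_x).
exact: (stair_drop2 st_x).
Qed.

Lemma tail01_step x v : state_inv Tail01 x -> state_inv (step Tail01 v) (rcons x v).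
Proof.
case=> avoid_x x_le sub_x; have x_nil : x != [::] by case: (x) sub_x.
rewrite /=; case: ifP => v_le1; last first.
  split; last by rewrite -size_eq0 size_rcons.
  apply/negP => /avoider_rcons [] // _ _ + _; apply; exists 0, 1.
  by rewrite /= ltnNge v_le1.
split; last exact: subseq_trans sub_x (subseq_rcons _ _).
  apply/avoider_rcons => //; split=> //; first by rewrite (leq_trans v_le1).
    by case=> a [b]; lia.
  case=> a [c [/andP [av vc] /mem_subseq/(_ c)]].
  by rewrite !inE eqxx !orbT => /(_ isT)/(allP x_le); lia.
by rewrite all_rcons v_le1.
Qed.

Lemma tail0_step x v : state_inv Tail0 x -> state_inv (step Tail0 v) (rcons x v).
Proof.
case=> avoid_x sub_x; have x_nil : x != [::] by case: (x) sub_x.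
rewrite /=; case: eqP => [-> | /eqP v_neq0].
  by split; [exact: avoider_rcons0 | exact: subseq_trans sub_x (subseq_rcons _ _)].
split; last by rewrite -size_eq0 size_rcons.
apply/negP => /avoider_rcons [] // _ _ no0102 no0121.
have [v1 | v_neq1] := eqVneq v 1.
  apply: no0121; exists 0, 2; split; first by rewrite v1.
  by rewrite v1; apply: subseq_trans sub_x.
apply: no0102; exists 0, 1; split; first by lia.
exact: subseq_trans sub_x.
Qed.

Lemma state_inv_step s x v : state_inv s x -> state_inv (step s v) (rcons x v).
Proof.
case: s => [|m|||]; [|exact: stair_step | exact: tail01_step | exact: tail0_step |].
  move=> /= ->; rewrite -[rcons _ _]/[:: v]; case: eqP => [-> | /eqP v_neq0].
    by split; rewrite ?avoider1.
  by rewrite /= avoider1 v_neq0.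
case=> avoid_x x_nil; split; last by rewrite -size_eq0 size_rcons.
by apply: contra avoid_x => /avoider_rcons [].
Qed.

Lemma state_inv_run x : state_inv (run x) x.
Proof.
by elim/last_ind: x => [|x v IHx] //; rewrite /run foldl_rcons; apply: state_inv_step.
Qed.

Definition alive (s : state) : bool := if s is Dead then false else true.

Lemma avoider_run x : x != [::] -> avoider x = alive (run x).
Proof.
case/lastP: x => [|x v] // _; have := state_inv_run (rcons x v).
rewrite /run foldl_rcons; case: (step _ v) => [|m|||] /=.
- by move/eqP; rewrite -size_eq0 size_rcons.
- by case.
- by case.
- by case.
- by case=> /negbTE.
Qed.

Definition nexts (s : state) : seq nat :=
  match s with
  | Start => [:: 0]
  | Stair m => if m is 0 then [:: 0; 1] else [:: m; m.+1; 0]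
  | Tail01 => [:: 0; 1]
  | Tail0 => [:: 0]
  | Dead => [::]
  end.

Lemma uniq_nexts s : uniq (nexts s).
Proof. by case: s => [|[|m]|||] //=; rewrite !inE; lia. Qed.

Lemma alive_step s v : alive (step s v) = alive s && (v \in nexts s).
Proof.
case: s => [|[|m]|||] /=; rewrite ?inE; try by case: v => [|[|v]].
case: ifP => [v_in | v_out] /=; first by lia.
by case: eqP => [-> | /eqP v_neq0] /=; [case: (m.+1 == 1) | lia].
Qed.

Lemma alive_foldl_step s w : alive (foldl step s w) -> alive s.
Proof. by elim: w s => //= v w IHw s /IHw; rewrite alive_step => /andP []. Qed.

Fixpoint words (s : state) (n : nat) : seq (seq nat) :=
  if n is n'.+1 then [seq v :: w | v <- nexts s, w <- words (step s v) n']
  else if alive s then [:: [::]] else [::].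

Lemma mem_words s n w : (w \in words s n) = (size w == n) && alive (foldl step s w).
Proof.
elim: n s w => [|n IHn] s [|v w] /=; first by case: (alive s).
- by case: (alive s).
- by apply/allpairsPdep => -[? [? [_ _ ]]].
apply/allpairsPdep/idP => [[v' [w' [v_in + [-> ->]]]]|]; first by rewrite IHn.
rewrite eqSS => /andP [size_w alive_w]; exists v, w; split=> //; last by rewrite IHn size_w.
by have := alive_foldl_step alive_w; rewrite alive_step => /andP [].
Qed.

Lemma uniq_words s n : uniq (words s n).
Proof.
elim: n s => [|n IHn] s /=; first by case: (alive s).
apply: allpairs_uniq_dep => [|v _|[v w] [v' w'] _ _ [-> ->]] //; exact: uniq_nexts.
Qed.

Lemma size_words s n :
  size (words s n.+1) = sumn [seq size (words (step s v) n) | v <- nexts s].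
Proof. exact: size_allpairs_dep. Qed.

Lemma size_words_Tail0 n : size (words Tail0 n) = 1.
Proof. by elim: n => [|n IHn] //; rewrite size_words /= IHn. Qed.

Lemma size_words_Tail01 n : size (words Tail01 n) = 2 ^ n.
Proof. by elim: n => [|n IHn] //; rewrite size_words /= IHn addn0 expnS mul2n addnn. Qed.

Lemma size_words_Stair_high m n : (size (words (Stair m.+2) n)).+1 = 2 ^ n.+1.
Proof.
elim: n m => [|n IHn] m //; rewrite size_words /= !(leqnn, leqnSn) /= size_words_Tail0.
by have := IHn m; have := IHn m.+1; rewrite !expnS; lia.
Qed.

Lemma size_words_Stair1 n : size (words (Stair 1) n) + n + 2 = 3 * 2 ^ n.
Proof.
elim: n => [|n IHn] //; rewrite size_words /= size_words_Tail01.
by have := size_words_Stair_high 0 n; rewrite !expnS; lia.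
Qed.

Lemma size_words_Stair0 n : 2 * size (words (Stair 0) n) + n.+1 ^ 2 + n.+1 + 2 = 3 * 2 ^ n.+1.
Proof.
elim: n => [|n IHn] //; rewrite size_words /=.
by move: IHn (size_words_Stair1 n); rewrite !(expnS 2); nia.
Qed.

Lemma card_tuple_ord (A : pred (seq nat)) n (s : seq (seq nat)) :
  uniq s -> (forall y, (y \in s) = (size y == n) && A y) ->
  (forall y, A y -> all (fun a => a < size y) y) ->
  #|[set t : n.-tuple 'I_n | A (map val t)]| = size s.
Proof.
move=> s_uniq mem_s A_lt; rewrite cardE -(size_map (fun t : n.-tuple 'I_n => map val t)).
apply/perm_size/uniq_perm => //.
  by rewrite map_inj_uniq ?enum_uniq // => t1 t2 /(inj_map val_inj)/val_inj.
move=> y; apply/mapP/idP => [[t + ->] | ].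
  by rewrite mem_enum inE mem_s size_map size_tuple eqxx.
rewrite mem_s => /andP [/eqP size_y Ay].
have val_t : map val (pmap insub y : seq 'I_n) = y.
  rewrite (pmap_filter (@insubK _ _ _)); apply/all_filterP.
  by apply: sub_all (A_lt y Ay) => a; rewrite /= isSome_insub size_y.
have size_t : size (pmap insub y : seq 'I_n) == n by rewrite -(size_map val) val_t size_y.
by exists (Tuple size_t); rewrite ?mem_enum ?inE /= val_t.
Qed.

Theorem theorem3p5 (n : nat) : 1 <= n ->
  2 * aP [:: [:: 0; 1; 0; 2]; [:: 0; 1; 2; 1]] n = 3 * 2 ^ n - (n ^ 2 + n + 2).
Proof.
case: n => [|n] // _.
have -> : aP [:: [:: 0; 1; 0; 2]; [:: 0; 1; 2; 1]] n.+1 = size (words Start n.+1).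
  apply: (card_tuple_ord (A := avoider) (uniq_words _ _)) => y.
    rewrite mem_words; have [size_y|] //= := eqVneq (size y) n.+1.
    by rewrite avoider_run // -size_eq0 size_y.
  by case/andP => /ascent_seq_lt_size.
by have := size_words_Stair0 n; rewrite size_words /=; lia.
Qed.
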